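(* Let $\Sigma$ be a language consisting only of $0$-ary predicate symbols, unary predicate symbols and constant symbols, and let $\mathcal{T}_\Sigma$ be the family of all complete theories in $\Sigma$. If $\Sigma$ consists of finitely many symbols, then ${\rm RS}(\mathcal{T}_\Sigma)$ is finite (a natural number). If $\Sigma$ has infinitely many symbols, then ${\rm RS}(\mathcal{T}_\Sigma)=\infty$.
   Context: Theories are complete consistent first-order theories; structures have nonempty universes. $\mathcal{T}_\Sigma$ is the family of complete theories of all $\Sigma$-structures, where each constant symbol $c$ may be regarded as a unary predicate $R_c$ interpreted as $\{c\}$. For a family $\mathcal{T}$ of theories and a sentence $\varphi$ of its language, $\mathcal{T}_\varphi=\{T\in\mathcal{T}\mid\varphi\in T\}$. The rank ${\rm RS}$ of a family is defined as follows: ${\rm RS}(\emptyset)=-1$; ${\rm RS}(\mathcal{T})=0$ for finite nonempty $\mathcal{T}$; ${\rm RS}(\mathcal{T})\ge 1$ for infinite $\mathcal{T}$; for $\alpha=\beta+1$, ${\rm RS}(\mathcal{T})\ge\alpha$ iff there are pairwise inconsistent sentences $\varphi_n$, $n\in\omega$, of the language of $\mathcal{T}$ with ${\rm RS}(\mathcal{T}_{\varphi_n})\ge\beta$ for all $n$; for limit $\alpha$, ${\rm RS}(\mathcal{T})\ge\alpha$ iff ${\rm RS}(\mathcal{T})\ge\beta$ for all $\beta<\alpha$; ${\rm RS}(\mathcal{T})=\alpha$ iff ${\rm RS}(\mathcal{T})\ge\alpha$ and not ${\rm RS}(\mathcal{T})\ge\alpha+1$; ${\rm RS}(\mathcal{T})=\infty$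 if ${\rm RS}(\mathcal{T})\ge\alpha$ for every ordinal $\alpha$. *)

(* First-order logic (with equality) over a language Sigma
   consisting of 0-ary predicate symbols (indexed by P0), unary predicate
   symbols (indexed by P1) and constant symbols (indexed by C). *)
From Stdlib Require Import List.
Import ListNotations.

Set Implicit Arguments.

Inductive term (C : Type) : Type :=
| tvar : nat -> term C
| tconst : C -> term C.

Inductive form (P0 P1 C : Type) : Type :=
| fbot : form P0 P1 C
| feq : term C -> term C -> form P0 P1 C
| fp0 : P0 -> form P0 P1 C
| fp1 : P1 -> term C -> form P0 P1 C
| fimp : form P0 P1 C -> form P0 P1 C -> form P0 P1 C
| fall : nat -> form P0 P1 C -> form P0 P1 C.

Arguments tvar {C} _.
Arguments fbot {P0 P1 C}.
Arguments feq {P0 P1 C} _ _.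
Arguments fp0 {P0 P1 C} _.
Arguments fp1 {P0 P1 C} _ _.
Arguments fimp {P0 P1 C} _ _.
Arguments fall {P0 P1 C} _ _.
Arguments tconst {C} _.

Definition term_has_var {C : Type} (x : nat) (t : term C) : Prop :=
  match t with tvar y => x = y | tconst _ => False end.

Fixpoint occurs_free {P0 P1 C : Type} (x : nat) (phi : form P0 P1 C) : Prop :=
  match phi with
  | fbot => False
  | feq t1 t2 => term_has_var x t1 \/ term_has_var x t2
  | fp0 _ => False
  | fp1 _ t => term_has_var x t
  | fimp a b => occurs_free x a \/ occurs_free x b
  | fall y a => x <> y /\ occurs_free x a
  end.

Definition sentence {P0 P1 C : Type} (phi : form P0 P1 C) : Prop :=
  forall x, ~ occurs_free x phi.

Record structure (P0 P1 C : Type) : Type := {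
  carrier : Type;
  point : carrier;                       (* the universe is nonempty *)
  interp0 : P0 -> Prop;
  interp1 : P1 -> carrier -> Prop;
  interpc : C -> carrier }.

Definition eval_term {P0 P1 C : Type} (M : structure P0 P1 C)
  (v : nat -> carrier M) (t : term C) : carrier M :=
  match t with tvar n => v n | tconst c => interpc M c end.

Definition upd {A : Type} (v : nat -> A) (x : nat) (a : A) : nat -> A :=
  fun y => if Nat.eqb y x then a else v y.

Fixpoint sat {P0 P1 C : Type} (M : structure P0 P1 C)
  (v : nat -> carrier M) (phi : form P0 P1 C) : Prop :=
  match phi with
  | fbot => False
  | feq t1 t2 => eval_term M v t1 = eval_term M v t2
  | fp0 p => interp0 M p
  | fp1 p t => interp1 M p (eval_term M v t)
  | fimp a b => sat M v a -> sat M v b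
  | fall x a => forall m : carrier M, sat M (upd v x m) a
  end.

Definition models {P0 P1 C : Type} (M : structure P0 P1 C) (phi : form P0 P1 C) : Prop :=
  forall v : nat -> carrier M, sat M v phi.

Definition theory (P0 P1 C : Type) : Type := form P0 P1 C -> Prop.
Definition family (P0 P1 C : Type) : Type := theory P0 P1 C -> Prop.

Definition Th {P0 P1 C : Type} (M : structure P0 P1 C) : theory P0 P1 C :=
  fun phi => sentence phi /\ models M phi.

Definition TSigma (P0 P1 C : Type) : family P0 P1 C :=
  fun T => exists M : structure P0 P1 C, forall phi, T phi <-> Th M phi.
Arguments TSigma : clear implicits.

Definition restrict {P0 P1 C : Type} (F : family P0 P1 C) (phi : form P0 P1 C)
  : family P0 P1 C := fun T => F T /\ T phi.

Definition same_theory {P0 P1 C : Type} (T1 T2 : theory P0 P1 C) : Prop :=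
  forall phi, T1 phi <-> T2 phi.

Definition fam_nonempty {P0 P1 C : Type} (F : family P0 P1 C) : Prop :=
  exists T, F T.

Definition fam_finite {P0 P1 C : Type} (F : family P0 P1 C) : Prop :=
  exists l : list (theory P0 P1 C),
    forall T, F T -> exists T', In T' l /\ same_theory T T'.

Definition fam_infinite {P0 P1 C : Type} (F : family P0 P1 C) : Prop :=
  ~ fam_finite F.

Definition inconsistent2 {P0 P1 C : Type} (phi psi : form P0 P1 C) : Prop :=
  ~ exists M : structure P0 P1 C, models M phi /\ models M psi.

(** ** Ordinals: Brouwer trees with arbitrary (type-indexed) suprema.
    Every ordinal is denoted by such a tree; [OL I f] denotes sup_{i:I} f i. *)
Inductive Ord : Type :=
| OZ : Ord
| OS : Ord -> Ord
| OL : forall I : Type, (I -> Ord) -> Ord.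
Arguments OL : clear implicits.

Fixpoint isZero (a : Ord) : Prop :=
  match a with
  | OZ => True
  | OS _ => False
  | OL J f => forall i, isZero (f i)
  end.

Fixpoint ord_of_nat (n : nat) : Ord :=
  match n with O => OZ | S k => OS (ord_of_nat k) end.

(** ** The rank RS.  [RSge a F] means RS(F) >= a.
    - RS(F) >= 0 iff F is nonempty (RS(empty) = -1, finite nonempty -> 0);
    - RS(F) >= 1 if F is infinite;
    - RS(F) >= b+1 iff there are pairwise inconsistent sentences phi_n with
      RS(F_{phi_n}) >= b for all n;
    - for a supremum (limit) a, RS(F) >= a iff RS(F) >= b for all b below a. *)
Fixpoint RSge {P0 P1 C : Type} (a : Ord) (F : family P0 P1 C) : Prop :=
  match a with
  | OZ => fam_nonempty F
  | OS b =>
      (isZero b /\ fam_infinite F) \/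
      exists phi : nat -> form P0 P1 C,
        (forall n, sentence (phi n)) /\
        (forall n m, n <> m -> inconsistent2 (phi n) (phi m)) /\
        (forall n, RSge b (restrict F (phi n)))
  | OL J f => fam_nonempty F /\ forall i, RSge (f i) F
  end.

Definition RS_eq {P0 P1 C : Type} (a : Ord) (F : family P0 P1 C) : Prop :=
  RSge a F /\ ~ RSge (OS a) F.

Definition RS_infty {P0 P1 C : Type} (F : family P0 P1 C) : Prop :=
  forall a : Ord, RSge a F.

Definition fin_type (A : Type) : Prop := exists l : list A, forall x : A, In x l.

From Stdlib Require Import List Arith Lia Classical ClassicalEpsilon FinFun.
Import ListNotations.

(* Call a cell a complete type over the unary predicates.
   Suppose the constants and chosen elements of M and N satisfy the same
   atomic formulas, and every cell contains equally many further elements,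
   counted up to q.  Then Duplicator wins the q-round Ehrenfeucht–Fraïssé
   game, so M and N agree on sentences of quantifier depth at most q.  In a
   family closed under this equivalence, either every member has all its
   finite cells of size below q -- then the family is finite, as such a theory
   is determined by finitely many bounded counts -- or some member has a
   finite cell with at least q elements, which can be made infinite without
   leaving the family.  Restricting to T_phi only raises q by the depth of
   phi, so RS >= k + 1 yields a member with at least k + 1 infinite cells;
   hence RS is at most the number of cells.

   Infinitely many symbols give independent sentences B_j:
   p_j for a 0-ary p_j, "p_j is nonempty" for a unary p_j, or c_2j = c_2j+1.
   The sentences "B_(N+n) is the first true one among B_N, B_(N+1), ..." are
   pairwise inconsistent, and restricting to one of them yields again a family
   depending only on finitely many B_j, so RS >= alpha for every alpha by
   induction on alpha. *)

Section Language.
Variables P0 P1 C : Type.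
Notation St := (structure P0 P1 C).
Notation Fm := (form P0 P1 C).

(** * Ehrenfeucht–Fraïssé game *)

Definition in_cell (X : St) (tau : P1 -> bool) (m : carrier X) : Prop :=
  forall p, interp1 X p m <-> tau p = true.

Definition cell_of (X : St) (m : carrier X) : P1 -> bool :=
  fun p => if excluded_middle_informative (interp1 X p m) then true else false.

Lemma in_cell_of X m : in_cell X (cell_of X m) m.
Proof.
  intro p. unfold cell_of.
  destruct (excluded_middle_informative (interp1 X p m)); split; auto; discriminate.
Qed.

Lemma in_cell_transfer (X Y : St) tau tau' x y :
  in_cell X tau x -> in_cell Y tau y -> (in_cell X tau' x <-> in_cell Y tau' y).
Proof.
  intros Hx Hy. split; intros H p; specialize (Hx p); specialize (Hy p); specialize (H p); tauto.
Qed.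

(* A name is a constant symbol or a position in the tuple of chosen elements. *)
Definition name_val (X : St) (a : list (carrier X)) (n : C + nat) : carrier X :=
  match n with inl c => interpc X c | inr i => nth i a (point X) end.

Definition valid_name {A : Type} (a : list A) (n : C + nat) : Prop :=
  match n with inl _ => True | inr i => i < length a end.

Lemma valid_name_length {A B : Type} (a : list A) (b : list B) n :
  length a = length b -> valid_name a n -> valid_name b n.
Proof. destruct n; simpl; lia. Qed.

Definition unnamed (X : St) (a : list (carrier X)) (m : carrier X) : Prop :=
  forall n, valid_name a n -> m <> name_val X a n.

Lemma unnamed_iff X a m :
  unnamed X a m <-> (forall c, m <> interpc X c) /\ ~ In m a.
Proof.
  split.
  - intros H. split; [intro c; exact (H (inl c) I)|].
    intro Hin. destruct (In_nth _ _ (point X) Hin) as [i [Hi E]].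
    exact (H (inr i) Hi (eq_sym E)).
  - intros [Hc Ha] [c|i] Hv E; simpl in *; [exact (Hc c E)|].
    apply Ha. rewrite E. apply nth_In; exact Hv.
Qed.

Lemma unnamed_cons X a x m : unnamed X (x :: a) m <-> unnamed X a m /\ m <> x.
Proof. rewrite !unnamed_iff. simpl. intuition. Qed.

Definition cell_ge (X : St) (a : list (carrier X)) (tau : P1 -> bool) (j : nat) : Prop :=
  exists l, length l = j /\ NoDup l /\
    forall m, In m l -> in_cell X tau m /\ unnamed X a m.

Lemma cell_ge_0 X a tau : cell_ge X a tau 0.
Proof. exists []. split; [auto|split; [constructor|intros m []]]. Qed.

Lemma cell_ge_le X a tau j j' : j' <= j -> cell_ge X a tau j -> cell_ge X a tau j'.
Proof.
  intros Hj [l [Hl [Hn Hm]]]. exists (firstn j' l).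
  rewrite <- (firstn_skipn j' l) in Hn, Hm. split; [|split].
  - apply firstn_length_le. lia.
  - eapply NoDup_app_remove_r; eauto.
  - intros z Hz. apply Hm, in_or_app; auto.
Qed.

Lemma cell_ge_ext X a tau tau' j :
  (forall p, tau p = tau' p) -> (cell_ge X a tau j <-> cell_ge X a tau' j).
Proof.
  intros He. split; intros [l [Hl [Hn Hm]]]; exists l; split; auto; split; auto;
    intros z Hz; destruct (Hm z Hz) as [H1 H2]; split; auto; intro p;
    rewrite (H1 p), (He p); tauto.
Qed.

Lemma NoDup_drop {A : Type} (x : A) (l : list A) j :
  NoDup l -> length l = S j ->
  exists l', NoDup l' /\ length l' = j /\ forall z, In z l' -> In z l /\ z <> x.
Proof.
  intros Hn Hl. destruct (classic (In x l)) as [Hi|Hi].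
  - destruct (in_split _ _ Hi) as [l1 [l2 ->]].
    destruct (NoDup_remove _ _ _ Hn) as [Hn' Hx].
    exists (l1 ++ l2). rewrite length_app in *. simpl in Hl.
    split; [auto|split; [lia|]]. intros z Hz. split.
    + apply in_app_or in Hz. apply in_or_app. simpl. tauto.
    + intros ->. contradiction.
  - destruct l as [|y l]; [discriminate|]. inversion Hn; subst.
    exists l. split; [auto|split; [auto|]]. intros z Hz. split; [right; auto|].
    intros ->. apply Hi. right; auto.
Qed.

Lemma cell_ge_cons_fresh X a tau x j :
  in_cell X tau x -> unnamed X a x -> (cell_ge X (x :: a) tau j <-> cell_ge X a tau (S j)).
Proof.
  intros Hx Ha. split.
  - intros [l [Hl [Hn Hm]]]. exists (x :: l). split; [simpl; lia|split].
    + constructor; auto. intro Hi.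
      destruct (proj1 (unnamed_cons X a x x) (proj2 (Hm x Hi))) as [_ []]. reflexivity.
    + intros m [<-|Hi]; [auto|]. destruct (Hm m Hi) as [H1 H2].
      apply unnamed_cons in H2. tauto.
  - intros [l [Hl [Hn Hm]]]. destruct (NoDup_drop x l j Hn Hl) as [l' [Hn' [Hl' Hz]]].
    exists l'. split; [auto|split; [auto|]]. intros m Hi.
    destruct (Hz m Hi) as [Hi1 Hne]. destruct (Hm m Hi1) as [H1 H2].
    split; [auto|]. apply unnamed_cons. auto.
Qed.

Lemma cell_ge_cons_irrelevant X a tau x j :
  (forall m, in_cell X tau m -> unnamed X a m -> m <> x) ->
  (cell_ge X (x :: a) tau j <-> cell_ge X a tau j).
Proof.
  intros Hx. split; intros [l [Hl [Hn Hm]]]; exists l; split; auto; split; auto;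
    intros m Hi; destruct (Hm m Hi) as [H1 H2]; split; auto; rewrite unnamed_cons in *.
  - tauto.
  - auto.
Qed.

Lemma cell_ge_cons_named X a tau n0 j : valid_name a n0 ->
  (cell_ge X (name_val X a n0 :: a) tau j <-> cell_ge X a tau j).
Proof. intros Hv. apply cell_ge_cons_irrelevant. intros m _ Hm. exact (Hm n0 Hv). Qed.

Lemma cell_ge_cons_other X a tau x j :
  ~ in_cell X tau x -> (cell_ge X (x :: a) tau j <-> cell_ge X a tau j).
Proof. intros Hx. apply cell_ge_cons_irrelevant. intros m Hm _ ->. contradiction. Qed.

Lemma valid_name_cons {A : Type} (a : list A) (x : A) n : valid_name (x :: a) n ->
  n = inr 0 \/ exists n', valid_name a n' /\
    forall (Y : St) (b : list (carrier Y)) y, name_val Y (y :: b) n = name_val Y b n'.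
Proof.
  destruct n as [c|[|i]]; simpl; intros Hv; auto.
  - right. exists (inl c). split; auto.
  - right. exists (inr i). simpl. split; [lia|auto].
Qed.

Lemma valid_name_cons_named {A : Type} (a : list A) (x : A) n0 n :
  valid_name a n0 -> valid_name (x :: a) n -> exists n', valid_name a n' /\
    forall (Y : St) (b : list (carrier Y)), name_val Y (name_val Y b n0 :: b) n = name_val Y b n'.
Proof.
  intros Hv0 Hv. destruct (valid_name_cons a x n Hv) as [->|[n' [Hv' E]]].
  - exists n0. auto.
  - exists n'. split; auto.
Qed.

(* Winning positions of the q-round game: the named elements form a partial
   isomorphism and every cell has equally many unnamed elements, counted up to q. *)
Record ef_equiv (M N : St) (a : list (carrier M)) (b : list (carrier N)) (q : nat) : Prop := {
  ef_length : length a = length b;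
  ef_interp0 : forall p, interp0 M p <-> interp0 N p;
  ef_eq : forall n1 n2, valid_name a n1 -> valid_name a n2 ->
    (name_val M a n1 = name_val M a n2 <-> name_val N b n1 = name_val N b n2);
  ef_interp1 : forall p n, valid_name a n ->
    (interp1 M p (name_val M a n) <-> interp1 N p (name_val N b n));
  ef_cells : forall tau j, j <= q -> (cell_ge M a tau j <-> cell_ge N b tau j) }.

Arguments ef_length {M N a b q}.
Arguments ef_interp0 {M N a b q}.
Arguments ef_eq {M N a b q}.
Arguments ef_interp1 {M N a b q}.
Arguments ef_cells {M N a b q}.

Lemma ef_equiv_sym M N a b q : ef_equiv M N a b q -> ef_equiv N M b a q.
Proof.
  intros HR. pose proof (valid_name_length b a) as Hv.
  split; [symmetry; apply HR | | | |]; intros; symmetry.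
  - apply HR.
  - apply HR; apply Hv; auto; symmetry; apply HR.
  - apply HR; apply Hv; auto; symmetry; apply HR.
  - apply HR; auto.
Qed.

Lemma ef_equiv_mono M N a b q q' : q' <= q -> ef_equiv M N a b q -> ef_equiv M N a b q'.
Proof. intros Hq HR. split; try apply HR. intros tau j Hj. apply HR. lia. Qed.

Lemma ef_forth_named M N a b q n0 : ef_equiv M N a b q -> valid_name a n0 ->
  ef_equiv M N (name_val M a n0 :: a) (name_val N b n0 :: b) q.
Proof.
  intros HR Hv0.
  assert (Hv0' : valid_name b n0) by exact (valid_name_length a b n0 (ef_length HR) Hv0).
  split.
  - simpl. rewrite (ef_length HR). reflexivity.
  - apply HR.
  - intros n1 n2 Hv1 Hv2.
    destruct (valid_name_cons_named a (name_val M a n0) n0 n1) as [n1' [Hv1' E1]]; auto.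
    destruct (valid_name_cons_named a (name_val M a n0) n0 n2) as [n2' [Hv2' E2]]; auto.
    rewrite !E1, !E2. apply HR; auto.
  - intros p n Hv.
    destruct (valid_name_cons_named a (name_val M a n0) n0 n) as [n' [Hv' E]]; auto.
    rewrite !E. apply HR; auto.
  - intros tau j Hj. rewrite !cell_ge_cons_named; auto. apply HR; auto.
Qed.

Lemma ef_extend_fresh M N a b q tau m m' :
  ef_equiv M N a b (S q) -> unnamed M a m -> unnamed N b m' ->
  in_cell M tau m -> in_cell N tau m' ->
  ef_equiv M N (m :: a) (m' :: b) q.
Proof.
  intros HR Hm Hm' Hc Hc'.
  assert (Hb : forall n, valid_name a n -> valid_name b n)
    by (intro n; apply valid_name_length, (ef_length HR)).
  split.
  - simpl. rewrite (ef_length HR). reflexivity.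
  - apply HR.
  - intros n1 n2 Hv1 Hv2.
    destruct (valid_name_cons a m n1 Hv1) as [->|[n1' [Hv1' E1]]];
    destruct (valid_name_cons a m n2 Hv2) as [->|[n2' [Hv2' E2]]];
      rewrite ?E1, ?E2; simpl.
    + tauto.
    + split; intros E; exfalso; [exact (Hm n2' Hv2' E)|exact (Hm' n2' (Hb _ Hv2') E)].
    + split; intros E; exfalso;
        [exact (Hm n1' Hv1' (eq_sym E))|exact (Hm' n1' (Hb _ Hv1') (eq_sym E))].
    + apply HR; auto.
  - intros p n Hv. destruct (valid_name_cons a m n Hv) as [->|[n' [Hv' E]]].
    + simpl. rewrite (Hc p), (Hc' p). tauto.
    + rewrite !E. apply HR; auto.
  - intros tau' j Hj. destruct (classic (in_cell M tau' m)) as [Hin|Hout].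
    + assert (Hin' : in_cell N tau' m')
        by (apply (in_cell_transfer M N tau tau' m m'); auto).
      rewrite (cell_ge_cons_fresh _ _ _ _ _ Hin Hm), (cell_ge_cons_fresh _ _ _ _ _ Hin' Hm').
      apply HR. lia.
    + assert (Hout' : ~ in_cell N tau' m')
        by (rewrite <- (in_cell_transfer M N tau tau' m m'); auto).
      rewrite (cell_ge_cons_other _ _ _ _ _ Hout), (cell_ge_cons_other _ _ _ _ _ Hout').
      apply HR. lia.
Qed.

Lemma ef_forth M N a b q : ef_equiv M N a b (S q) ->
  forall m, exists m', ef_equiv M N (m :: a) (m' :: b) q.
Proof.
  intros HR m. destruct (classic (exists n0, valid_name a n0 /\ m = name_val M a n0))
    as [[n0 [Hv ->]]|Hfresh].
  - exists (name_val N b n0). apply ef_forth_named; auto.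
    apply (ef_equiv_mono _ _ _ _ (S q)); auto.
  - assert (Hm : unnamed M a m) by (intros n Hv E; apply Hfresh; eauto).
    assert (H1 : cell_ge M a (cell_of M m) 1).
    { exists [m]. split; [auto|split; [repeat constructor; intros []|]].
      intros z [<-|[]]. auto using in_cell_of. }
    apply (ef_cells HR) in H1; [|lia].
    destruct H1 as [[|m' [|]] [Hl [_ Hm']]]; try discriminate.
    destruct (Hm' m' (or_introl eq_refl)) as [Hc' Hu'].
    exists m'. apply (ef_extend_fresh _ _ _ _ _ (cell_of M m)); auto using in_cell_of.
Qed.

Fixpoint quant_depth (phi : Fm) : nat :=
  match phi with
  | fimp a b => Nat.max (quant_depth a) (quant_depth b)
  | fall _ a => S (quant_depth a)
  | _ => 0
  end.

Definition assign_corr (V : list nat) (M N : St) (v : nat -> carrier M) (w : nat -> carrier N)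
  (a : list (carrier M)) (b : list (carrier N)) : Prop :=
  forall y, In y V ->
    exists i, i < length a /\ v y = nth i a (point M) /\ w y = nth i b (point N).

Lemma assign_corr_upd V M N v w a b x m m' :
  assign_corr V M N v w a b ->
  assign_corr (x :: V) M N (upd v x m) (upd w x m') (m :: a) (m' :: b).
Proof.
  intros HC y Hy. unfold upd. destruct (Nat.eqb_spec y x) as [->|Ne].
  - exists 0. simpl. repeat split; auto. lia.
  - destruct Hy as [->|Hy]; [congruence|].
    destruct (HC y Hy) as [i [Hi [E1 E2]]]. exists (S i). simpl. repeat split; auto. lia.
Qed.

Lemma eval_term_name V M N v w a b (t : term C) :
  (forall x, term_has_var x t -> In x V) -> assign_corr V M N v w a b ->
  exists n, valid_name a n /\
    eval_term M v t = name_val M a n /\ eval_term N w t = name_val N b n.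
Proof.
  intros Ht HC. destruct t as [y|c]; simpl in *.
  - destruct (HC y (Ht y eq_refl)) as [i [Hi [E1 E2]]]. exists (inr i). simpl; auto.
  - exists (inl c). simpl; auto.
Qed.

Lemma sat_ef_equiv (phi : Fm) : forall V M N a b v w q,
  (forall x, occurs_free x phi -> In x V) -> quant_depth phi <= q ->
  ef_equiv M N a b q -> assign_corr V M N v w a b ->
  (sat M v phi <-> sat N w phi).
Proof.
  induction phi as [| t1 t2 | p | p t | f1 IH1 f2 IH2 | x f IH];
    intros V M N a b v w q Hfv Hq HR HC; simpl in *.
  - tauto.
  - destruct (eval_term_name V M N v w a b t1) as [n1 [Hv1 [-> ->]]]; auto.
    destruct (eval_term_name V M N v w a b t2) as [n2 [Hv2 [-> ->]]]; auto.
    apply HR; auto.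
  - apply HR.
  - destruct (eval_term_name V M N v w a b t) as [n [Hv [-> ->]]]; auto.
    apply HR; auto.
  - rewrite (IH1 V M N a b v w q), (IH2 V M N a b v w q); auto; try tauto; lia.
  - destruct q as [|q]; [lia|].
    assert (Hfv' : forall y, occurs_free y f -> In y (x :: V)).
    { intros y Hy. destruct (Nat.eq_dec y x); [left; auto|right; apply Hfv; auto]. }
    split.
    + intros H m'. destruct (ef_forth N M b a q (ef_equiv_sym _ _ _ _ _ HR) m') as [m HR'].
      apply (IH (x :: V) M N (m :: a) (m' :: b) (upd v x m) (upd w x m') q);
        auto using assign_corr_upd, ef_equiv_sym; lia.
    + intros H m. destruct (ef_forth M N a b q HR m) as [m' HR'].
      apply (IH (x :: V) M N (m :: a) (m' :: b) (upd v x m) (upd w x m') q);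
        auto using assign_corr_upd; lia.
Qed.

Lemma models_ef_equiv M N q (phi : Fm) :
  sentence phi -> quant_depth phi <= q -> ef_equiv M N [] [] q ->
  (models M phi <-> models N phi).
Proof.
  intros Hs Hq HR.
  assert (Hfv : forall x, occurs_free x phi -> In x []) by (intros x Hx; exact (Hs x Hx)).
  assert (HC : forall v w, assign_corr [] M N v w [] []) by (intros v w y []).
  split; intros H v.
  - rewrite <- (sat_ef_equiv phi [] M N [] [] (fun _ => point M) v q); auto.
  - rewrite (sat_ef_equiv phi [] M N [] [] v (fun _ => point N) q); auto.
Qed.

Lemma same_theory_ef_equiv (M N : St) :
  (forall q, ef_equiv M N [] [] q) -> same_theory (Th M) (Th N).
Proof.
  intros HR phi. unfold Th.
  pose proof (fun Hs => models_ef_equiv M N (quant_depth phi) phi Hs (le_n _) (HR _)) as E.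
  split; intros [Hs Hm]; split; auto; apply (E Hs); auto.
Qed.

(** * Finite languages *)

Definition infinite_cell (M : St) (tau : P1 -> bool) : Prop := forall j, cell_ge M [] tau j.

Definition small_cells (q : nat) (M : St) : Prop :=
  forall tau, ~ infinite_cell M tau -> ~ cell_ge M [] tau q.

Fixpoint cell_count (M : St) (tau : P1 -> bool) (q : nat) : nat :=
  match q with
  | 0 => 0
  | S q' => if excluded_middle_informative (cell_ge M [] tau q) then q else cell_count M tau q'
  end.

Lemma cell_count_le M tau q : cell_count M tau q <= q.
Proof.
  induction q as [|q IH]; simpl; auto.
  destruct (excluded_middle_informative _); lia.
Qed.

Lemma cell_count_spec M tau q j : j <= q -> (j <= cell_count M tau q <-> cell_ge M [] tau j).
Proof.
  induction q as [|q IH]; intros Hj; simpl.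
  - replace j with 0 by lia. split; auto using cell_ge_0.
  - destruct (excluded_middle_informative (cell_ge M [] tau (S q))) as [H|H].
    + split; [intros _; exact (cell_ge_le _ _ _ _ _ Hj H)|lia].
    + destruct (Nat.eq_dec j (S q)) as [->|Ne].
      * pose proof (cell_count_le M tau q). split; [lia|contradiction].
      * apply IH. lia.
Qed.

Lemma cell_ge_of_count M N tau q :
  small_cells q M -> small_cells q N -> cell_count M tau q = cell_count N tau q ->
  forall j, cell_ge M [] tau j <-> cell_ge N [] tau j.
Proof.
  intros sM sN E j.
  destruct (classic (cell_ge M [] tau q)) as [Hq|Hq].
  - assert (HqN : cell_ge N [] tau q).
    { rewrite <- (cell_count_spec N tau q q (le_n q)), <- E.
      apply (cell_count_spec M tau q q (le_n q)), Hq. }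
    assert (iM : infinite_cell M tau) by (apply NNPP; intro H; exact (sM tau H Hq)).
    assert (iN : infinite_cell N tau) by (apply NNPP; intro H; exact (sN tau H HqN)).
    split; intros _; auto.
  - assert (HqN : ~ cell_ge N [] tau q).
    { rewrite <- (cell_count_spec N tau q q (le_n q)), <- E.
      rewrite (cell_count_spec M tau q q (le_n q)). exact Hq. }
    destruct (le_lt_dec j q) as [Hj|Hj].
    + rewrite <- (cell_count_spec M tau q j Hj), <- (cell_count_spec N tau q j Hj), E.
      reflexivity.
    + split; intro H; exfalso; [apply Hq|apply HqN]; apply (cell_ge_le _ _ _ j); auto; lia.
Qed.

Definition inflate (M : St) (tau : P1 -> bool) : St :=
  {| carrier := (carrier M + nat)%type;
     point := inl (point M);
     interp0 := interp0 M;
     interp1 := fun p x => match x with inl m => interp1 M p m | inr _ => tau p = true end;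
     interpc := fun c => inl (interpc M c) |}.

Lemma unnamed_nil X m : unnamed X [] m <-> forall c, m <> interpc X c.
Proof. rewrite unnamed_iff. simpl. tauto. Qed.

Lemma cell_ge_inflate M tau tau' j : cell_ge M [] tau' j -> cell_ge (inflate M tau) [] tau' j.
Proof.
  intros [l [Hl [Hn Hm]]]. exists (map inl l). split; [|split].
  - rewrite length_map; auto.
  - apply Injective_map_NoDup; auto. intros x y E. injection E. auto.
  - intros z Hz. apply in_map_iff in Hz. destruct Hz as [m [<- Hi]].
    destruct (Hm m Hi) as [H1 H2]. rewrite unnamed_nil in *. split; [exact H1|].
    intros c E. injection E. apply H2.
Qed.

Lemma cell_ge_deflate M tau tau' j : ~ (forall p, tau' p = tau p) ->
  cell_ge (inflate M tau) [] tau' j -> cell_ge M [] tau' j.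
Proof.
  intros Hne [l [Hl [Hn Hm]]].
  set (proj := fun x : carrier (inflate M tau) =>
                 match x with inl m => m | inr _ => point M end).
  assert (E : map inl (map proj l) = l).
  { rewrite map_map. rewrite <- (map_id l) at 2. apply map_ext_in.
    intros [m|k] Hi; auto. exfalso. apply Hne. intro p.
    destruct (Hm _ Hi) as [H1 _]. specialize (H1 p). simpl in H1.
    destruct (tau' p), (tau p); intuition. }
  exists (map proj l). split; [|split].
  - rewrite length_map; auto.
  - apply (NoDup_map_inv (@inl (carrier M) nat)). rewrite E; auto.
  - intros m Hi. assert (Hi' : In (inl m) l) by (rewrite <- E; apply in_map; auto).
    destruct (Hm _ Hi') as [H1 H2]. rewrite unnamed_nil in *. split; [exact H1|].
    intros c Ec. apply (H2 c). simpl. rewrite Ec. reflexivity.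
Qed.

Lemma infinite_cell_inflate M tau : infinite_cell (inflate M tau) tau.
Proof.
  intro j. exists (map inr (seq 0 j)). split; [|split].
  - rewrite length_map, length_seq; auto.
  - apply Injective_map_NoDup; [intros x y E; injection E; auto|apply seq_NoDup].
  - intros z Hz. apply in_map_iff in Hz. destruct Hz as [k [<- _]].
    split; [intro p; simpl; tauto|]. apply unnamed_nil. intros c E. discriminate.
Qed.

Lemma infinite_cell_inflate_mono M tau tau' :
  infinite_cell M tau' -> infinite_cell (inflate M tau) tau'.
Proof. intros H j. apply cell_ge_inflate, H. Qed.

Lemma ef_equiv_inflate M tau q : cell_ge M [] tau q -> ef_equiv M (inflate M tau) [] [] q.
Proof.
  intro Hq. split; [auto|simpl; tauto| | |].
  - intros [c1|i1] [c2|i2] Hv1 Hv2; simpl in *; try lia.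
    split; [intros ->; auto|intro E; injection E; auto].
  - intros p [c|i] Hv; simpl in *; [tauto|lia].
  - intros tau' j Hj. split; [apply cell_ge_inflate|].
    destruct (classic (forall p, tau' p = tau p)) as [He|Hne].
    + intros _. rewrite (cell_ge_ext _ _ _ _ _ He). apply (cell_ge_le _ _ _ q); auto.
    + apply cell_ge_deflate; auto.
Qed.

Record q_closed (q : nat) (G : family P0 P1 C) : Prop := {
  closed_sub : forall T, G T -> TSigma P0 P1 C T;
  closed_same : forall T T', same_theory T T' -> G T -> G T';
  closed_ef : forall M N, ef_equiv M N [] [] q -> G (Th M) -> G (Th N) }.

Lemma q_closed_TSigma : q_closed 0 (TSigma P0 P1 C).
Proof.
  split.
  - auto.
  - intros T T' H [M HM]. exists M. intro phi. rewrite <- (H phi). apply HM.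
  - intros M N _ _. exists N. intro; tauto.
Qed.

Lemma q_closed_restrict q G phi : q_closed q G -> sentence phi ->
  q_closed (Nat.max q (quant_depth phi)) (restrict G phi).
Proof.
  intros HG Hs. split.
  - intros T [HT _]. apply HG; auto.
  - intros T T' HTT [HT Hp]. split; [apply (closed_same _ _ HG T); auto|apply HTT; auto].
  - intros M N HR [HM [_ Hp]]. split; [|split; auto].
    + apply (closed_ef _ _ HG M); auto.
      apply (ef_equiv_mono _ _ _ _ (Nat.max q (quant_depth phi))); auto. lia.
    + rewrite <- (models_ef_equiv M N (Nat.max q (quant_depth phi))); auto. lia.
Qed.

Lemma q_closed_member q G T : q_closed q G -> G T -> exists M, same_theory T (Th M) /\ G (Th M).
Proof.
  intros HG HT. destruct (closed_sub _ _ HG T HT) as [M HM].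
  exists M. split; [exact HM|]. apply (closed_same _ _ HG T); auto.
Qed.

Lemma fam_finite_mono (F G : family P0 P1 C) :
  (forall T, G T -> F T) -> fam_finite F -> fam_finite G.
Proof. intros H [l Hl]. exists l. auto. Qed.

Lemma pigeonhole (L : nat) (R : nat -> nat -> Prop) :
  (forall n, exists i, i < L /\ R n i) -> exists n m i, n <> m /\ R n i /\ R m i.
Proof.
  intros H. destruct (choice _ H) as [f Hf].
  apply NNPP. intro Hno.
  assert (Hnd : NoDup (map f (seq 0 (S L)))).
  { apply NoDup_map_NoDup_ForallPairs; [|apply seq_NoDup].
    intros n m _ _ E. apply NNPP. intro Ne. apply Hno.
    exists n, m, (f n). rewrite E at 2. split; [auto|split; apply Hf]. }
  apply NoDup_incl_length with (l' := seq 0 L) in Hnd.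
  - rewrite length_map, !length_seq in Hnd. lia.
  - intros i Hi. apply in_map_iff in Hi. destruct Hi as [n [<- _]].
    apply in_seq. split; [lia|apply Hf].
Qed.

Lemma finite_family_no_antichain (F : family P0 P1 C) (phi : nat -> Fm) :
  fam_finite F -> (forall T, F T -> exists M, same_theory T (Th M)) ->
  (forall n m, n <> m -> inconsistent2 (phi n) (phi m)) ->
  ~ (forall n, exists T, F T /\ T (phi n)).
Proof.
  intros [l Hl] HF Hinc Hall.
  destruct (pigeonhole (length l) (fun n i => exists T, F T /\ T (phi n) /\
              same_theory T (nth i l (fun _ => False))))
    as [n [m [i [Hnm [[T1 [F1 [H1 S1]]] [T2 [F2 [H2 S2]]]]]]]].
  { intro n. destruct (Hall n) as [T [HT Hp]].
    destruct (Hl T HT) as [T' [Hin HS]].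
    destruct (@In_nth (theory P0 P1 C) _ _ (fun _ => False) Hin) as [i [Hi E]].
    exists i. split; auto. exists T. rewrite E. auto. }
  destruct (HF T2 F2) as [M HM].
  apply (Hinc n m Hnm). exists M. split.
  - apply (HM (phi n)), S2, S1, H1.
  - apply (HM (phi m)), H2.
Qed.

Lemma nat_boundary (P : nat -> Prop) m : P 0 -> ~ P m -> exists n, P n /\ ~ P (S n).
Proof.
  induction m as [|m IH]; intros H0 Hm; [contradiction|].
  destruct (classic (P m)) as [H|H]; eauto.
Qed.

Definition unit_structure : St :=
  {| carrier := unit; point := tt; interp0 := fun _ => False;
     interp1 := fun _ _ => False; interpc := fun _ => tt |}.

Fixpoint bool_funs (l : list P1) : list (P1 -> bool) :=
  match l with
  | [] => [fun _ => false]
  | p :: l' => flat_map (fun f =>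
      [fun x => if excluded_middle_informative (x = p) then true else f x;
       fun x => if excluded_middle_informative (x = p) then false else f x]) (bool_funs l')
  end.

Lemma bool_funs_spec l tau : exists f, In f (bool_funs l) /\ forall x, In x l -> f x = tau x.
Proof.
  induction l as [|p l [f [Hf Hx]]]; simpl.
  - exists (fun _ => false). split; auto. intros x [].
  - exists (fun x => if excluded_middle_informative (x = p) then tau p else f x). split.
    + apply in_flat_map. exists f. split; auto. destruct (tau p); simpl; auto.
    + intros x Hin. destruct (excluded_middle_informative (x = p)) as [->|Ne]; auto.
      apply Hx. destruct Hin; [congruence|auto].
Qed.

Definition indicator (P : Prop) : nat := if excluded_middle_informative P then 1 else 0.

Lemma indicator_le P : indicator P <= 1.
Proof. unfold indicator. destruct (excluded_middle_informative P); auto. Qed.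

Lemma indicator_inj P Q : indicator P = indicator Q -> (P <-> Q).
Proof.
  unfold indicator. destruct (excluded_middle_informative P), (excluded_middle_informative Q);
    intros E; try discriminate; tauto.
Qed.

Lemma indicator_mono (P Q : Prop) : (P -> Q) -> indicator P <= indicator Q.
Proof.
  unfold indicator. destruct (excluded_middle_informative P), (excluded_middle_informative Q);
    intuition.
Qed.

Lemma indicator_lt (P Q : Prop) : ~ P -> Q -> indicator P < indicator Q.
Proof.
  unfold indicator. destruct (excluded_middle_informative P), (excluded_middle_informative Q);
    intuition.
Qed.

Fixpoint bounded_lists (L B : nat) : list (list nat) :=
  match L with
  | 0 => [[]]
  | S L' => flat_map (fun x => map (cons x) (bounded_lists L' B)) (seq 0 (S B))
  end.

Lemma in_bounded_lists {A : Type} (f : A -> nat) B l :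
  (forall x, f x <= B) -> In (map f l) (bounded_lists (length l) B).
Proof.
  intros Hf. induction l as [|x l IH]; [simpl; auto|].
  change (In (f x :: map f l)
            (flat_map (fun y => map (cons y) (bounded_lists (length l) B)) (seq 0 (S B)))).
  apply in_flat_map. exists (f x). split; [apply in_seq; specialize (Hf x); lia|].
  apply in_map. exact IH.
Qed.

Lemma list_sum_map_le {A : Type} (f g : A -> nat) l :
  (forall x, In x l -> f x <= g x) -> list_sum (map f l) <= list_sum (map g l).
Proof.
  induction l as [|y l IH]; simpl; intros H; auto.
  pose proof (H y (or_introl eq_refl)). pose proof (IH (fun x Hx => H x (or_intror Hx))). lia.
Qed.

Lemma list_sum_map_lt {A : Type} (f g : A -> nat) l x0 :
  (forall x, In x l -> f x <= g x) -> In x0 l -> f x0 < g x0 ->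
  list_sum (map f l) < list_sum (map g l).
Proof.
  induction l as [|y l IH]; simpl; intros H Hx0 Hlt; [destruct Hx0|].
  pose proof (H y (or_introl eq_refl)).
  destruct Hx0 as [<-|Hx0].
  - pose proof (list_sum_map_le f g l (fun x Hx => H x (or_intror Hx))). lia.
  - pose proof (IH (fun x Hx => H x (or_intror Hx)) Hx0 Hlt). lia.
Qed.

Lemma list_sum_indicator_le {A : Type} (P : A -> Prop) l :
  list_sum (map (fun x => indicator (P x)) l) <= length l.
Proof. induction l as [|x l IH]; simpl; auto. pose proof (indicator_le (P x)). lia. Qed.

Section FiniteLanguage.
Variables (l0 : list P0) (l1 : list P1) (lc : list C).
Hypotheses (l0_full : forall p, In p l0) (l1_full : forall p, In p l1)
  (lc_full : forall c, In c lc).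

Definition cells : list (P1 -> bool) := bool_funs l1.

Lemma cells_full tau : exists t, In t cells /\ forall p, t p = tau p.
Proof. destruct (bool_funs_spec l1 tau) as [t [Ht He]]. exists t. auto. Qed.

Definition signature (q : nat) (M : St) : list nat * list nat * list nat * list nat :=
  (map (fun p => indicator (interp0 M p)) l0,
   map (fun cd => indicator (interpc M (fst cd) = interpc M (snd cd))) (list_prod lc lc),
   map (fun pc => indicator (interp1 M (fst pc) (interpc M (snd pc)))) (list_prod l1 lc),
   map (fun tau => cell_count M tau q) cells).

Definition signatures (q : nat) : list (list nat * list nat * list nat * list nat) :=
  list_prod (list_prod (list_prod
    (bounded_lists (length l0) 1)
    (bounded_lists (length (list_prod lc lc)) 1))
    (bounded_lists (length (list_prod l1 lc)) 1))
    (bounded_lists (length cells) q).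

Lemma signature_in q M : In (signature q M) (signatures q).
Proof.
  repeat apply in_prod; apply in_bounded_lists; auto using indicator_le, cell_count_le.
Qed.

Lemma ef_equiv_of_signature q M N :
  small_cells q M -> small_cells q N -> signature q M = signature q N ->
  forall Q, ef_equiv M N [] [] Q.
Proof.
  intros sM sN E Q. injection E as E0 Ec E1 Et.
  split; [auto| | | |].
  - intro p. apply indicator_inj, (ext_in_map E0 p); auto.
  - intros [c1|i1] [c2|i2] Hv1 Hv2; simpl in *; try lia.
    apply indicator_inj, (ext_in_map Ec (c1, c2)), in_prod; auto.
  - intros p [c|i] Hv; simpl in *; try lia.
    apply indicator_inj, (ext_in_map E1 (p, c)), in_prod; auto.
  - intros tau j _. destruct (cells_full tau) as [t [Ht He]].
    rewrite <- !(cell_ge_ext _ _ _ _ j He).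
    apply (cell_ge_of_count M N t q); auto. apply (ext_in_map Et t Ht).
Qed.

Definition small_theories (q : nat) : family P0 P1 C :=
  fun T => exists M, small_cells q M /\ same_theory T (Th M).

Lemma small_theories_finite q : fam_finite (small_theories q).
Proof.
  set (pick := fun s => Th (epsilon (inhabits unit_structure)
                               (fun M => small_cells q M /\ signature q M = s))).
  exists (map pick (signatures q)). intros T [M [sM HT]].
  exists (pick (signature q M)). split; [apply in_map, signature_in|].
  destruct (epsilon_spec (inhabits unit_structure)
              (fun M' => small_cells q M' /\ signature q M' = signature q M))
    as [sM' E]; [eauto|].
  intro phi. rewrite (HT phi). apply same_theory_ef_equiv.
  intro Q. apply (ef_equiv_of_signature q); auto.
Qed.

Definition infinite_cells (M : St) : nat :=
  list_sum (map (fun tau => indicator (infinite_cell M tau)) cells).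

Lemma infinite_cells_le M : infinite_cells M <= length cells.
Proof. apply list_sum_indicator_le. Qed.

Lemma inflate_step q G M : q_closed q G -> G (Th M) -> ~ small_cells q M ->
  exists N, G (Th N) /\ S (infinite_cells M) <= infinite_cells N.
Proof.
  intros HG HM Hs.
  destruct (not_all_ex_not _ _ Hs) as [tau Htau].
  apply imply_to_and in Htau. destruct Htau as [Hfin Hq]. apply NNPP in Hq.
  exists (inflate M tau). split.
  - apply (closed_ef _ _ HG M); auto using ef_equiv_inflate.
  - destruct (cells_full tau) as [t [Ht He]].
    apply (list_sum_map_lt _ _ _ t); [|exact Ht|].
    + intros x _. apply indicator_mono, infinite_cell_inflate_mono.
    + apply indicator_lt.
      * intro H. apply Hfin. intro j. rewrite <- (cell_ge_ext _ _ _ _ j He). apply H.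
      * intro j. rewrite (cell_ge_ext _ _ _ _ j He). apply infinite_cell_inflate.
Qed.

Lemma restrict_member q G phi T : q_closed q G -> restrict G phi T ->
  exists M, G (Th M) /\ models M phi.
Proof.
  intros HG [HT Hp]. destruct (q_closed_member q G T HG HT) as [M [HTM HM]].
  exists M. split; auto. apply (proj1 (HTM phi) Hp).
Qed.

Lemma infinite_family_step q G : q_closed q G -> fam_infinite G ->
  exists N, G (Th N) /\ 1 <= infinite_cells N.
Proof.
  intros HG Hinf.
  destruct (classic (exists M, G (Th M) /\ ~ small_cells q M)) as [[M [HM Hns]]|Hall].
  - destruct (inflate_step q G M HG HM Hns) as [N [HN Hb]]. exists N. split; auto. lia.
  - exfalso. apply Hinf, (fam_finite_mono (small_theories q)), small_theories_finite.
    intros T HT. destruct (q_closed_member q G T HG HT) as [M [HTM HM]].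
    exists M. split; auto. apply NNPP. intro Hns. apply Hall. eauto.
Qed.

(* A candidate that is not [small_cells q] can be inflated; if all candidates
   were, the finitely many small theories would contain every [phi n]. *)
Lemma antichain_step q G (phi : nat -> Fm) k :
  q_closed q G -> (forall n, sentence (phi n)) ->
  (forall n m, n <> m -> inconsistent2 (phi n) (phi m)) ->
  (forall n, exists M, G (Th M) /\ models M (phi n) /\ k <= infinite_cells M) ->
  exists N, G (Th N) /\ S k <= infinite_cells N.
Proof.
  intros HG Hs Hinc Hex.
  destruct (classic (exists n M, G (Th M) /\ models M (phi n) /\ k <= infinite_cells M /\
                                 ~ small_cells q M)) as [[n [M [HM [_ [Hk Hns]]]]]|Hall].
  - destruct (inflate_step q G M HG HM Hns) as [N [HN Hb]]. exists N. split; auto. lia.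
  - exfalso. apply (finite_family_no_antichain (small_theories q) phi (small_theories_finite q));
      auto.
    + intros T [M [_ HT]]. eauto.
    + intro n. destruct (Hex n) as [M [HM [Hp Hk]]]. exists (Th M). split.
      * exists M. split; [|intro; tauto]. apply NNPP. intro Hns. apply Hall. eauto 7.
      * split; auto.
Qed.

Lemma RS_many_infinite_cells k : forall q G, q_closed q G -> RSge (ord_of_nat (S k)) G ->
  exists M, G (Th M) /\ S k <= infinite_cells M.
Proof.
  induction k as [|k IH]; intros q G HG HR; simpl in HR.
  - destruct HR as [[_ Hinf]|[phi [Hs [Hinc HR]]]].
    + exact (infinite_family_step q G HG Hinf).
    + apply (antichain_step q G phi 0); auto.
      intro n. destruct (HR n) as [T HT].
      destruct (restrict_member q G (phi n) T HG HT) as [M [HM Hp]].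
      exists M. split; [|split]; auto. lia.
  - destruct HR as [[[] _]|[phi [Hs [Hinc HR]]]].
    apply (antichain_step q G phi (S k)); auto.
    intro n. destruct (IH _ _ (q_closed_restrict q G (phi n) HG (Hs n)) (HR n))
      as [M [[HM [_ Hp]] Hk]].
    eauto.
Qed.

Lemma RS_finite_language : exists n, RS_eq (ord_of_nat n) (TSigma P0 P1 C).
Proof.
  assert (Hub : ~ RSge (ord_of_nat (S (length cells))) (TSigma P0 P1 C)).
  { intro H. destruct (RS_many_infinite_cells _ 0 _ q_closed_TSigma H) as [M [_ Hb]].
    pose proof (infinite_cells_le M). lia. }
  assert (H0 : RSge (ord_of_nat 0) (TSigma P0 P1 C)).
  { exists (Th unit_structure), unit_structure. intro; tauto. }
  destruct (nat_boundary (fun n => RSge (ord_of_nat n) (TSigma P0 P1 C)) _ H0 Hub)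
    as [n [Hn Hn']]. exists n. split; auto.
Qed.

End FiniteLanguage.

(** * Infinite languages *)

Definition fnot (a : Fm) : Fm := fimp a fbot.
Definition fand (a b : Fm) : Fm := fnot (fimp a (fnot b)).

Lemma sat_agree (phi : Fm) : forall (M : St) v w,
  (forall x, occurs_free x phi -> v x = w x) -> (sat M v phi <-> sat M w phi).
Proof.
  induction phi as [| t1 t2 | p | p t | f1 IH1 f2 IH2 | x f IH]; intros M v w H; simpl in *.
  - tauto.
  - destruct t1, t2; simpl in *; rewrite ?(H n), ?(H n0) by auto; tauto.
  - tauto.
  - destruct t; simpl in *; rewrite ?(H n) by auto; tauto.
  - rewrite (IH1 M v w), (IH2 M v w); try tauto; intros; apply H; auto.
  - split; intros Hm m; [rewrite <- (IH M (upd v x m))|rewrite (IH M (upd v x m))]; auto;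
      intros y Hy; unfold upd; destruct (Nat.eqb_spec y x); auto.
Qed.

Lemma models_iff_sat (M : St) (phi : Fm) v : sentence phi -> (models M phi <-> sat M v phi).
Proof.
  intros Hs. split; [intro H; apply H|]. intros H w.
  rewrite (sat_agree phi M w v); auto. intros x Hx. destruct (Hs x Hx).
Qed.

Lemma sentence_fnot a : sentence a -> sentence (fnot a).
Proof. intros Ha x [H|[]]. exact (Ha x H). Qed.

Lemma sentence_fand a b : sentence a -> sentence b -> sentence (fand a b).
Proof. intros Ha Hb x [[H|[H|[]]]|[]]; [exact (Ha x H)|exact (Hb x H)]. Qed.

Lemma models_fnot (M : St) a : sentence a -> (models M (fnot a) <-> ~ models M a).
Proof.
  intros Ha. rewrite !(models_iff_sat M _ (fun _ => point M)); auto using sentence_fnot.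
  simpl. tauto.
Qed.

Lemma models_fand (M : St) a b : sentence a -> sentence b ->
  (models M (fand a b) <-> models M a /\ models M b).
Proof.
  intros Ha Hb. rewrite !(models_iff_sat M _ (fun _ => point M)); auto using sentence_fand.
  simpl. destruct (classic (sat M (fun _ => point M) a)); tauto.
Qed.

Definition independent (B : nat -> Fm) : Prop :=
  (forall j, sentence (B j)) /\
  forall s : nat -> Prop, exists M : St, forall j, models M (B j) <-> s j.

Section Independent.
Variable B : nat -> Fm.
Hypothesis B_independent : independent B.

Let B_sentence : forall j, sentence (B j) := proj1 B_independent.

Fixpoint none_of (N k : nat) : Fm :=
  match k with 0 => fnot fbot | S k' => fand (fnot (B (N + k'))) (none_of N k') end.

Definition first_true (N k : nat) : Fm := fand (B (N + k)) (none_of N k).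

Lemma sentence_none_of N k : sentence (none_of N k).
Proof.
  induction k; simpl.
  - apply sentence_fnot. intros x [].
  - apply sentence_fand; auto using sentence_fnot.
Qed.

Lemma sentence_first_true N k : sentence (first_true N k).
Proof. apply sentence_fand; auto using sentence_none_of. Qed.

Lemma models_none_of (M : St) N k :
  models M (none_of N k) <-> forall j, j < k -> ~ models M (B (N + j)).
Proof.
  induction k as [|k IH]; simpl.
  - rewrite models_fnot by (intros x []).
    split; [intros _ j Hj; lia|intros _ H; exact (H (fun _ => point M))].
  - rewrite models_fand, models_fnot, IH by auto using sentence_fnot, sentence_none_of.
    split.
    + intros [Hk Hj] j Hlt. destruct (Nat.eq_dec j k) as [->|Ne]; auto. apply Hj. lia.
    + intros H. split; auto.
Qed.

Lemma models_first_true (M : St) N k : models M (first_true N k) <->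
  models M (B (N + k)) /\ forall j, j < k -> ~ models M (B (N + j)).
Proof.
  unfold first_true. rewrite models_fand, models_none_of; auto using sentence_none_of. tauto.
Qed.

Lemma first_true_inconsistent N n m :
  n <> m -> inconsistent2 (first_true N n) (first_true N m).
Proof.
  intros Hnm [M [Hn Hm]]. rewrite models_first_true in Hn, Hm.
  destruct (Nat.lt_total n m) as [Hl|[E|Hl]]; [|contradiction|].
  - exact (proj2 Hm n Hl (proj1 Hn)).
  - exact (proj2 Hn m Hl (proj1 Hm)).
Qed.

Definition agree_below (N : nat) (M M' : St) : Prop :=
  forall j, j < N -> (models M (B j) <-> models M' (B j)).

Lemma agree_below_mono N N' M M' : N <= N' -> agree_below N' M M' -> agree_below N M M'.
Proof. intros HN H j Hj. apply H. lia. Qed.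

Lemma realize_above N (M : St) (t : nat -> Prop) :
  exists M', agree_below N M M' /\ forall j, N <= j -> (models M' (B j) <-> t j).
Proof.
  destruct (proj2 B_independent (fun j => j < N /\ models M (B j) \/ N <= j /\ t j))
    as [M' HM'].
  exists M'. split; intros j Hj; rewrite HM'; cbv beta.
  - split; [intro H; left; split; assumption|intros [[_ H]|[H _]]; [exact H|lia]].
  - split; [intros [[H _]|[_ H]]; [lia|exact H]|intro H; right; split; assumption].
Qed.

Definition stable_at (N : nat) (G : family P0 P1 C) : Prop :=
  (exists M, G (Th M)) /\ forall M M', agree_below N M M' -> G (Th M) -> G (Th M').

Lemma stable_at_restrict N n G :
  stable_at N G -> stable_at (N + S n) (restrict G (first_true N n)).
Proof.
  intros [[M HM] Hc]. split.
  - destruct (realize_above N M (fun j => j = N + n)) as [M' [Hag Hab]].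
    exists M'. split; [exact (Hc M M' Hag HM)|split; [apply sentence_first_true|]].
    apply models_first_true. split; [apply Hab; lia|].
    intros j Hj. rewrite Hab by lia. lia.
  - intros M1 M2 Hag [H1 [_ Hm1]]. split; [|split; [apply sentence_first_true|]].
    + apply (Hc M1); auto. apply (agree_below_mono N (N + S n)); auto. lia.
    + rewrite models_first_true in *. destruct Hm1 as [Hb Hj]. split.
      * apply (Hag (N + n)); [lia|exact Hb].
      * intros j Hjn Hb2. apply (Hj j Hjn), (Hag (N + j)); [lia|exact Hb2].
Qed.

Lemma RSge_stable_at (a : Ord) : forall N G, stable_at N G -> RSge a G.
Proof.
  induction a as [| b IH | I f IH]; intros N G HG; simpl.
  - destruct HG as [[M HM] _]. exists (Th M). exact HM.
  - right. exists (first_true N). split; [apply sentence_first_true|split].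
    + apply first_true_inconsistent.
    + intro n. apply (IH (N + S n)), stable_at_restrict, HG.
  - split; [destruct HG as [[M HM] _]; exists (Th M); exact HM|].
    intro i. exact (IH i N G HG).
Qed.

Lemma RS_infty_of_independent : RS_infty (TSigma P0 P1 C).
Proof.
  intro a. apply (RSge_stable_at a 0). split.
  - exists unit_structure, unit_structure. intro; tauto.
  - intros M M' _ _. exists M'. intro; tauto.
Qed.

End Independent.

Lemma independent_P0 (e : nat -> P0) : Injective e -> independent (fun j => fp0 (e j)).
Proof.
  intros He. split; [intros j x []|]. intros s.
  exists {| carrier := unit; point := tt; interp0 := fun p => exists j, p = e j /\ s j;
            interp1 := fun _ _ => False; interpc := fun _ => tt |}.
  intro j. split.
  - intro H. destruct (H (fun _ => tt)) as [j' [E Hs]]. apply He in E. subst. exact Hs.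
  - intros Hs v. exists j. auto.
Qed.

Lemma independent_P1 (e : nat -> P1) : Injective e ->
  independent (fun j => fnot (fall 0 (fnot (fp1 (e j) (tvar 0))))).
Proof.
  intros He. split; [intros j x H; simpl in H; tauto|]. intros s.
  exists {| carrier := unit; point := tt; interp0 := fun _ => False;
            interp1 := fun p _ => exists j, p = e j /\ s j; interpc := fun _ => tt |}.
  intro j. unfold models. simpl. split.
  - intro H. apply NNPP. intro Hn. apply (H (fun _ => tt)).
    intros m [j' [E Hs]]. apply He in E. subst. contradiction.
  - intros Hs v H. apply (H tt). exists j. auto.
Qed.

(* Interpret every [e (2 j)] as [true], and [e (2 j + 1)] as [true] exactly when [s j]. *)
Lemma independent_C (e : nat -> C) : Injective e ->
  independent (fun j => feq (P0 := P0) (P1 := P1)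
                            (tconst (e (2 * j))) (tconst (e (2 * j + 1)))).
Proof.
  intros He. split; [intros j x H; simpl in H; tauto|]. intros s.
  set (K := fun c => if excluded_middle_informative (exists j, c = e (2 * j + 1) /\ ~ s j)
                     then false else true).
  exists {| carrier := bool; point := true; interp0 := fun _ => False;
            interp1 := fun _ _ => False; interpc := K |}.
  intro j. unfold models. cbn [sat eval_term interpc].
  assert (Heven : K (e (2 * j)) = true).
  { unfold K. destruct (excluded_middle_informative _) as [[j' [E _]]|]; auto.
    apply He in E. lia. }
  assert (Hodd : K (e (2 * j + 1)) = true <-> s j).
  { unfold K. destruct (excluded_middle_informative _) as [[j' [E Hn]]|Hn].
    - apply He in E. replace j' with j in Hn by lia. split; [discriminate|contradiction].
    - split; auto. intros _. apply NNPP. intro Hs. apply Hn. eauto. }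
  rewrite Heven, <- Hodd. split; [intro H; symmetry; exact (H (fun _ => true))|auto].
Qed.

End Language.

Lemma injection_of_not_fin_type (X : Type) : ~ fin_type X -> exists e : nat -> X, Injective e.
Proof.
  intro Hnf.
  assert (Hfr : forall l : list X, exists x, ~ In x l).
  { intro l. apply NNPP. intro Hno. apply Hnf. exists l. intro x.
    apply NNPP. intro Hx. apply Hno. eauto. }
  destruct (choice _ Hfr) as [fresh Hfresh].
  set (prefix := fix prefix n :=
         match n with 0 => [] | S n' => fresh (prefix n') :: prefix n' end).
  exists (fun n => fresh (prefix n)).
  assert (Hin : forall i j, i < j -> In (fresh (prefix i)) (prefix j)).
  { intros i j. induction j as [|j IH]; intros H; [lia|]. simpl.
    destruct (Nat.eq_dec i j) as [->|Ne]; [left; auto|right; apply IH; lia]. }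
  intros i j E. destruct (Nat.lt_total i j) as [H|[H|H]]; auto; exfalso.
  - apply (Hfresh (prefix j)). rewrite <- E. apply Hin; auto.
  - apply (Hfresh (prefix i)). rewrite E. apply Hin; auto.
Qed.

Theorem proposition2p5 (P0 P1 C : Type) :
  ((fin_type P0 /\ fin_type P1 /\ fin_type C) ->
     exists n : nat, RS_eq (ord_of_nat n) (TSigma P0 P1 C)) /\
  (~ (fin_type P0 /\ fin_type P1 /\ fin_type C) ->
     RS_infty (TSigma P0 P1 C)).
Proof.
  split.
  - intros [[l0 H0] [[l1 H1] [lc Hc]]]. exact (RS_finite_language P0 P1 C l0 l1 lc H0 H1 Hc).
  - intro Hnf. destruct (classic (fin_type P0)) as [F0|F0].
    + destruct (classic (fin_type P1)) as [F1|F1].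
      * destruct (injection_of_not_fin_type C) as [e He]; [tauto|].
        exact (RS_infty_of_independent P0 P1 C _ (independent_C P0 P1 C e He)).
      * destruct (injection_of_not_fin_type P1 F1) as [e He].
        exact (RS_infty_of_independent P0 P1 C _ (independent_P1 P0 P1 C e He)).
    + destruct (injection_of_not_fin_type P0 F0) as [e He].
      exact (RS_infty_of_independent P0 P1 C _ (independent_P0 P0 P1 C e He)).
Qed.
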